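(* Let $W\in\{\mathrm{A}_{\frac12\infty},\mathrm{D}_{\frac12\infty}\}$. The endomorphisms $\dot J_W$, ${}^t\dot J_W$ of $H_{W,\mathbb{C}}$ and their inverses extend to bounded operators on the Hilbert space $\overline H_{W,\mathbb{C}}$, and the extensions of $\dot J_W$ and ${}^t\dot J_W$ (resp. of their inverses) are adjoint (transpose) to each other with respect to $\langle\cdot,\cdot\rangle$.
   Context: Index sets: $C_{W,0}=\{c_0^{(n)}:n\ge1\}$ for $W=\mathrm{A}_{\frac12\infty}$ and $C_{W,0}=\{c_0^{(n)}:n\ge1\}\cup\{c_0^+,c_0^-\}$ for $W=\mathrm{D}_{\frac12\infty}$; $C_{W,1}=\{c_1^{(n)}:n\ge1\}$; $C_W=C_{W,0}\sqcup C_{W,1}$. Adjacency: $c_0^{(n)}$ is adjacent to $c_1^{(n)}$ and $c_1^{(n+1)}$ for all $n\ge1$, and (type D only) $c_0^{\pm}$ are adjacent to $c_1^{(1)}$; no other adjacencies. (Geometrically these are the critical points of $f_W$, with $c\in C_{W,0}$ adjacent to $c'\in C_{W,1}$ iff $c$ lies in the closure of the bounded region of the real zero set containing $c'$.) $H_W=\bigoplus_{c\in C_W}\mathbb{Z}\gamma_c$, $H_{W,i}=\bigoplus_{c\in C_{W,i}}\mathbb{Z}\gamma_c$, $H_{W,\mathbb{C}}=H_W\otimes\mathbb{C}$ with Hermitian product $\langle\sum a_c\gamma_c,\sum b_c\gamma_c\rangle=\sum a_c\bar b_c$; $\overline H_{W,\mathbb{C}}$ is its $\ell^2$-completion. $J_W$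 is the bilinear form with $J_W(\gamma_c,\gamma_{c'})=1$ if $c=c'$, $-1$ if $c\in C_{W,0}$, $c'\in C_{W,1}$ adjacent, $0$ otherwise; ${}^tJ_W(\xi,\eta)=J_W(\eta,\xi)$. The associated endomorphisms are $\dot J_W(u)=\sum_{c\in C_W}J_W(u,\gamma_c)\gamma_c$ and ${}^t\dot J_W(u)=\sum_{c}{}^tJ_W(u,\gamma_c)\gamma_c$ (finite sums by local finiteness). *)

From HB Require Import structures.
From mathcomp Require Import all_boot all_order all_algebra.
From mathcomp Require Import all_classical all_reals.
From mathcomp Require Import ereal esum.
From mathcomp Require Import complex.
Set Implicit Arguments. Unset Strict Implicit. Unset Printing Implicit Defensive.
Import Order.TTheory GRing.Theory Num.Theory.
Local Open Scope classical_set_scope.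
Local Open Scope ring_scope.

Inductive diagram := A_half_inf | D_half_inf.

(** Ambient type of critical points:
    [c0 n] = c_0^{(n)}, [c1 n] = c_1^{(n)} (meaningful for n >= 1),
    [c0p] = c_0^+, [c0m] = c_0^-. *)
Inductive vtx := c0 of nat | c1 of nat | c0p | c0m.

Definition vtx_code (v : vtx) : nat * nat :=
  match v with c0 n => (0, n) | c1 n => (1, n) | c0p => (2, 0) | c0m => (3, 0) end.
Definition vtx_decode (p : nat * nat) : option vtx :=
  match p with
  | (0, n) => Some (c0 n) | (1, n) => Some (c1 n)
  | (2, _) => Some c0p | (3, _) => Some c0m | _ => None end%N.
Lemma vtx_codeK : pcancel vtx_code vtx_decode. Proof. by case. Qed.
HB.instance Definition _ := Countable.copy vtx (pcan_type vtx_codeK).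

Definition CW0 (W : diagram) : set vtx := fun c =>
  match c with
  | c0 n => (1 <= n)%N
  | c0p | c0m => W = D_half_inf
  | c1 _ => False end.
Definition CW1 (W : diagram) : set vtx := fun c =>
  match c with c1 n => (1 <= n)%N | _ => False end.
Definition CW (W : diagram) : set vtx := CW0 W `|` CW1 W.

Definition adj (W : diagram) (c c' : vtx) : Prop :=
  CW0 W c /\ CW1 W c' /\
  match c, c' with
  | c0 n, c1 m => m = n \/ m = n.+1
  | c0p, c1 m => m = 1%N
  | c0m, c1 m => m = 1%N
  | _, _ => False end.

Definition Jentry (R : realType) (W : diagram) (c c' : vtx) : R[i] :=
  if `[< CW W c /\ c = c' >] then 1
  else if `[< adj W c c' >] then -1 else 0.

(** Vectors of H_{W,C}: finitely supported complex functions on C_W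
    (u = sum_c u(c) gamma_c). *)
Definition vec (R : realType) := vtx -> R[i].
Definition inH (R : realType) (W : diagram) (u : vec R) : Prop :=
  (forall c, ~ CW W c -> u c = 0) /\ finite_set [set c | u c != 0].

Definition JW (R : realType) (W : diagram) (u v : vec R) : R[i] :=
  \sum_(c \in CW W) \sum_(c' \in CW W) u c * v c' * @Jentry R W c c'.
Definition tJW (R : realType) (W : diagram) (u v : vec R) : R[i] := JW W v u.

Definition gamma (R : realType) (c : vtx) : vec R :=
  fun c' => if `[< c' = c >] then 1 else 0.

Definition JWdot (R : realType) (W : diagram) (u : vec R) : vec R :=
  fun c => if `[< CW W c >] then JW W u (@gamma R c) else 0.
Definition tJWdot (R : realType) (W : diagram) (u : vec R) : vec R :=
  fun c => if `[< CW W c >] then tJW W u (@gamma R c) else 0.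

(** The Hilbert space completion \bar H_{W,C} = l^2(C_W). *)
Definition sqnorm (R : realType) (x : R[i]) : R := complex.Re x ^+ 2 + complex.Im x ^+ 2.
Definition l2norm2 (R : realType) (f : vec R) : \bar R :=
  \esum_(c in [set: vtx]) (sqnorm (f c))%:E.
Definition inL2 (R : realType) (W : diagram) (f : vec R) : Prop :=
  (forall c, ~ CW W c -> f c = 0) /\ (l2norm2 f < +oo)%E.

(** Unordered sum of a real family (meaningful for absolutely summable families). *)
Definition rsum (R : realType) (a : vtx -> R) : R :=
  fine (\esum_(c in [set: vtx]) (Num.max (a c) 0)%:E)
  - fine (\esum_(c in [set: vtx]) (Num.max (- a c) 0)%:E).

Definition herm (R : realType) (f g : vec R) : R[i] :=
  Complex (rsum (fun c => complex.Re (f c * conjc (g c))))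
          (rsum (fun c => complex.Im (f c * conjc (g c)))).

Definition bounded_extension (R : realType) (W : diagram)
    (phi T : vec R -> vec R) : Prop :=
  [/\ (forall f, inL2 W f -> inL2 W (T f)),
      (forall (a : R[i]) f g, inL2 W f -> inL2 W g ->
          T (fun c => a * f c + g c) = (fun c => a * T f c + T g c)),
      (exists M : R, 0 <= M /\
          forall f, inL2 W f -> (l2norm2 (T f) <= M%:E * l2norm2 f)%E)
    & (forall u, inH W u -> T u = phi u)].

Definition inverse_on_H (R : realType) (W : diagram) (phi psi : vec R -> vec R) : Prop :=
  forall u, inH W u -> [/\ inH W (psi u), phi (psi u) = u & psi (phi u) = u].

Definition adjoint_pair (R : realType) (W : diagram) (T S : vec R -> vec R) : Prop :=
  forall f g, inL2 W f -> inL2 W g -> herm (T f) g = herm f (S g).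

From HB Require Import structures.
From mathcomp Require Import all_boot all_order all_algebra.
From mathcomp Require Import all_classical all_reals.
From mathcomp Require Import ereal esum complex.
From mathcomp Require Import ring lra zify.
Set Implicit Arguments. Unset Strict Implicit. Unset Printing Implicit Defensive.
Import Order.TTheory GRing.Theory Num.Theory.
Local Open Scope classical_set_scope.
Local Open Scope ring_scope.

(* J_W = 1 - N, where (N u)(c) is the sum of u over the C_{W,0}-neighbours of
   c in C_{W,1}.  N reads only values on C_{W,0} and produces functions
   supported on C_{W,1}, so N^2 = 0 and J_W^{-1} = 1 + N; symmetrically
   tJ_W = 1 - N' with N' going from C_{W,1} to C_{W,0}.  The adjacency graph is
   the union of four matchings, c_0^(n)--c_1^(n), c_0^(n)--c_1^(n+1),
   c_0^+ -- c_1^(1) and c_0^- -- c_1^(1), each given by an involution of the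
   vertex type, so N and N' are sums of four partial permutations.  A partial
   permutation is an l^2-contraction whose adjoint is the partial permutation
   of the same matching read in the other direction; hence all four operators
   are bounded, and N' is the adjoint of N. *)

Section UnorderedSums.
Variable R : realType.
Implicit Types a b p q : vtx -> R.

Lemma esum_involutive (T : choiceType) (s : T -> T) (a : T -> \bar R) :
  involutive s -> \esum_(c in [set: T]) a (s c) = \esum_(c in [set: T]) a c.
Proof.
by move=> sK; rewrite -(reindex_esum setT setT s) // setTT_bijective; exact: inv_bij.
Qed.

Lemma esum_realD p q : (forall c, 0 <= p c) -> (forall c, 0 <= q c) ->
  \esum_(c in [set: vtx]) (p c + q c)%:E =
  (\esum_(c in [set: vtx]) (p c)%:E + \esum_(c in [set: vtx]) (q c)%:E)%E.
Proof.
move=> p0 q0; under eq_esum do rewrite EFinD.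
by rewrite esumD // => c _; rewrite lee_fin.
Qed.

Lemma esum_real_fineK p : (forall c, 0 <= p c) ->
  (\esum_(c in [set: vtx]) (p c)%:E < +oo)%E ->
  \esum_(c in [set: vtx]) (p c)%:E = (fine (\esum_(c in [set: vtx]) (p c)%:E))%:E.
Proof.
move=> p0 pfin; rewrite fineK // ge0_fin_numE // esum_ge0 // => c _.
by rewrite lee_fin.
Qed.

Lemma max0_sub_max0N (x : R) : Num.max x 0 - Num.max (- x) 0 = x.
Proof.
have [x0|x0] := leP x 0; first by rewrite max_l ?oppr_ge0 // sub0r opprK.
by rewrite max_r ?subr0 // oppr_le0 ltW.
Qed.

Definition abs_summable a := (\esum_(c in [set: vtx]) `|a c|%:E < +oo)%E.

Lemma abs_summable_le a b :
  (forall c, `|b c| <= `|a c|) -> abs_summable a -> abs_summable b.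
Proof. by move=> ba; apply: le_lt_trans; apply: le_esum => c _; rewrite lee_fin. Qed.

Lemma abs_summableD a b :
  abs_summable a -> abs_summable b -> abs_summable (fun c => a c + b c).
Proof.
move=> ha hb; rewrite /abs_summable.
apply: (@le_lt_trans _ _ (\esum_(c in [set: vtx]) (`|a c| + `|b c|)%:E)).
  by apply: le_esum => c _; rewrite lee_fin ler_normD.
by rewrite esum_realD ?lte_add_pinfty.
Qed.

Lemma esum_max0_fineK a : abs_summable a ->
  \esum_(c in [set: vtx]) (Num.max (a c) 0)%:E =
  (fine (\esum_(c in [set: vtx]) (Num.max (a c) 0)%:E))%:E.
Proof.
move=> ha; apply: esum_real_fineK => [c|]; first by rewrite le_max lexx orbT.
by apply: le_lt_trans ha; apply: le_esum => c _; rewrite lee_fin ge_max normr_ge0 ler_norm.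
Qed.

Lemma rsum_split a p q (P Q : R) :
  (forall c, 0 <= p c) -> (forall c, 0 <= q c) ->
  \esum_(c in [set: vtx]) (p c)%:E = P%:E -> \esum_(c in [set: vtx]) (q c)%:E = Q%:E ->
  (forall c, a c = p c - q c) -> rsum a = P - Q.
Proof.
move=> p0 q0 EP EQ apq.
have max_le (x y : R) : 0 <= y -> x <= y -> Num.max x 0 <= y.
  by move=> *; rewrite ge_max; apply/andP.
have pos_fin : (\esum_(c in [set: vtx]) (Num.max (a c) 0)%:E < +oo)%E.
  apply: (@le_lt_trans _ _ (P%:E)); last exact: ltry.
  by rewrite -EP; apply: le_esum => c _; rewrite lee_fin max_le // apq lerBlDr lerDl.
have neg_fin : (\esum_(c in [set: vtx]) (Num.max (- a c) 0)%:E < +oo)%E.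
  apply: (@le_lt_trans _ _ (Q%:E)); last exact: ltry.
  by rewrite -EQ; apply: le_esum => c _; rewrite lee_fin max_le // apq opprB lerBlDr lerDl.
have max0 (x : R) : 0 <= Num.max x 0 by rewrite le_max lexx orbT.
have parts : \esum_(c in [set: vtx]) (Num.max (a c) 0 + q c)%:E =
             \esum_(c in [set: vtx]) (Num.max (- a c) 0 + p c)%:E.
  apply: eq_esum => c _; congr (_%:E).
  by have := apq c; have := max0_sub_max0N (a c); lra.
move: parts; rewrite !esum_realD // EP EQ esum_real_fineK // [in X in _ = X]esum_real_fineK //.
by rewrite -!EFinD => -[]; rewrite /rsum; lra.
Qed.

Lemma rsumD a b : abs_summable a -> abs_summable b ->
  rsum (fun c => a c + b c) = rsum a + rsum b.
Proof.
move=> ha hb; have max0 (x : R) : 0 <= Num.max x 0 by rewrite le_max lexx orbT.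
have hNa : abs_summable (fun c => - a c) by apply: abs_summable_le ha => c; rewrite normrN.
have hNb : abs_summable (fun c => - b c) by apply: abs_summable_le hb => c; rewrite normrN.
rewrite (@rsum_split _ (fun c => Num.max (a c) 0 + Num.max (b c) 0)
  (fun c => Num.max (- a c) 0 + Num.max (- b c) 0)
  (fine (\esum_(c in [set: vtx]) (Num.max (a c) 0)%:E) +
   fine (\esum_(c in [set: vtx]) (Num.max (b c) 0)%:E))
  (fine (\esum_(c in [set: vtx]) (Num.max (- a c) 0)%:E) +
   fine (\esum_(c in [set: vtx]) (Num.max (- b c) 0)%:E))).
- by rewrite /rsum; lra.
- by move=> c; rewrite addr_ge0.
- by move=> c; rewrite addr_ge0.
- by rewrite esum_realD // EFinD -!esum_max0_fineK.
- by rewrite esum_realD // EFinD -!esum_max0_fineK.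
- by move=> c; have := max0_sub_max0N (a c); have := max0_sub_max0N (b c); lra.
Qed.

Lemma rsumN a : rsum (fun c => - a c) = - rsum a.
Proof.
by rewrite /rsum opprB; congr (_ - _); congr fine; apply: eq_esum => c _; rewrite ?opprK.
Qed.

Lemma rsum_involutive (s : vtx -> vtx) a : involutive s -> rsum (fun c => a (s c)) = rsum a.
Proof.
by move=> sK; rewrite /rsum (esum_involutive (fun c => (Num.max (a c) 0)%:E) sK)
  (esum_involutive (fun c => (Num.max (- a c) 0)%:E) sK).
Qed.

End UnorderedSums.

Section L2.
Variable R : realType.
Implicit Types (x y : R[i]) (f g : vec R) (T S : vec R -> vec R).

Lemma sqnorm_ge0 x : 0 <= sqnorm x.
Proof. by rewrite /sqnorm addr_ge0 // sqr_ge0. Qed.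

Lemma sqnorm0 : sqnorm (0 : R[i]) = 0.
Proof. by rewrite /sqnorm /= expr2 mulr0 addr0. Qed.

Lemma sqnormN x : sqnorm (- x) = sqnorm x.
Proof. by case: x => a b; rewrite /sqnorm /= !sqrrN. Qed.

Lemma sqnormD_le x y : sqnorm (x + y) <= 2 * sqnorm x + 2 * sqnorm y.
Proof.
case: x => a b; case: y => a' b'; rewrite /sqnorm /=.
by have := sqr_ge0 (a - a'); have := sqr_ge0 (b - b'); nra.
Qed.

Definition l2_finite f := (l2norm2 f < +oo)%E.

Definition l2_bounded T := exists M : R,
  0 <= M /\ forall f, (l2norm2 (T f) <= M%:E * l2norm2 f)%E.

Definition addop T S : vec R -> vec R := fun f c => T f c + S f c.
Definition oppop T : vec R -> vec R := fun f c => - T f c.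

Definition partial_perm (s : vtx -> vtx) (d : pred vtx) f : vec R :=
  fun c => if d c then f (s c) else 0.

Lemma l2_bounded_finite T f : l2_bounded T -> l2_finite f -> l2_finite (T f).
Proof.
move=> [M [M0 hT]] hf; apply: le_lt_trans (hT f) _.
by rewrite lte_mul_pinfty // lee_fin.
Qed.

Lemma l2_bounded_id : l2_bounded id.
Proof. by exists 1; split => // f; rewrite mul1e. Qed.

Lemma l2_boundedN T : l2_bounded T -> l2_bounded (oppop T).
Proof.
move=> [M [M0 hT]]; exists M; split => // f; apply: le_trans (hT f).
by apply: le_esum => c _; rewrite sqnormN.
Qed.

Lemma l2_boundedD T S : l2_bounded T -> l2_bounded S -> l2_bounded (addop T S).
Proof.
move=> [M [M0 hT]] [N [N0 hS]]; exists ((M + M) + (N + N)); split.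
  by rewrite !addr_ge0.
move=> f; have sq0 g c : 0 <= sqnorm (g c) by exact: sqnorm_ge0.
have sq20 g c : 0 <= sqnorm (g c) + sqnorm (g c) by rewrite addr_ge0.
apply: (@le_trans _ _ (\esum_(c in [set: vtx])
    ((sqnorm (T f c) + sqnorm (T f c)) + (sqnorm (S f c) + sqnorm (S f c)))%:E)).
  by apply: le_esum => c _; rewrite lee_fin; have := sqnormD_le (T f c) (S f c); lra.
rewrite esum_realD // (esum_realD (sq0 (T f)) (sq0 (T f))).
rewrite (esum_realD (sq0 (S f)) (sq0 (S f))) !EFinD !ge0_muleDl ?lee_fin ?addr_ge0 //.
have := hT f; have := hS f; rewrite /l2norm2 => hSf hTf.
by apply: leeD; apply: leeD.
Qed.

Lemma l2_bounded_partial_perm s d : involutive s -> l2_bounded (partial_perm s d).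
Proof.
move=> sK; exists 1; split => // f; rewrite mul1e /l2norm2.
rewrite -(esum_involutive (fun c => (sqnorm (f c))%:E) sK).
apply: le_esum => c _; rewrite lee_fin /partial_perm; case: (d c) => //.
by rewrite sqnorm0 sqnorm_ge0.
Qed.

End L2.

Section Hermitian.
Variable R : realType.
Implicit Types (x y : R[i]) (f g : vec R) (T S : vec R -> vec R).

Let Complex_add (a b a' b' : R) : Complex a b + Complex a' b' = Complex (a + a') (b + b').
Proof. by []. Qed.

Let Complex_opp (a b : R) : - Complex a b = Complex (- a) (- b).
Proof. by []. Qed.

Lemma normr_Re_mul_conj_le x y : `|complex.Re (x * conjc y)| <= sqnorm x + sqnorm y.
Proof.
case: x => a b; case: y => a' b'; rewrite /sqnorm /= ler_norml; apply/andP; split.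
  by have := sqr_ge0 (a + a'); have := sqr_ge0 (b + b'); nra.
by have := sqr_ge0 (a - a'); have := sqr_ge0 (b - b'); nra.
Qed.

Lemma normr_Im_mul_conj_le x y : `|complex.Im (x * conjc y)| <= sqnorm x + sqnorm y.
Proof.
case: x => a b; case: y => a' b'; rewrite /sqnorm /= ler_norml; apply/andP; split.
  by have := sqr_ge0 (a - b'); have := sqr_ge0 (b + a'); nra.
by have := sqr_ge0 (a + b'); have := sqr_ge0 (b - a'); nra.
Qed.

Lemma l2_finite_summable f : l2_finite f -> abs_summable (fun c => sqnorm (f c)).
Proof.
by move=> hf; apply: le_lt_trans hf; apply: le_esum => c _; rewrite ger0_norm ?sqnorm_ge0.
Qed.

Lemma abs_summable_mul_conj f g : l2_finite f -> l2_finite g ->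
  abs_summable (fun c => complex.Re (f c * conjc (g c))) /\
  abs_summable (fun c => complex.Im (f c * conjc (g c))).
Proof.
move=> /l2_finite_summable hf /l2_finite_summable hg.
have hfg := abs_summableD hf hg.
have norm_sum c : `|sqnorm (f c) + sqnorm (g c)| = sqnorm (f c) + sqnorm (g c).
  by rewrite ger0_norm // addr_ge0 ?sqnorm_ge0.
by split; apply: abs_summable_le hfg => c;
  rewrite norm_sum ?normr_Re_mul_conj_le ?normr_Im_mul_conj_le.
Qed.

Lemma hermDl f1 f2 g : l2_finite f1 -> l2_finite f2 -> l2_finite g ->
  herm (fun c => f1 c + f2 c) g = herm f1 g + herm f2 g.
Proof.
move=> h1 h2 hg; have [Re1 Im1] := abs_summable_mul_conj h1 hg.
have [Re2 Im2] := abs_summable_mul_conj h2 hg.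
rewrite /herm Complex_add -(rsumD Re1 Re2) -(rsumD Im1 Im2); congr Complex; congr rsum;
  by apply/funext => c; case: (f1 c) (f2 c) (g c) => [a b] [a' b'] [x y] /=; ring.
Qed.

Lemma hermDr f g1 g2 : l2_finite f -> l2_finite g1 -> l2_finite g2 ->
  herm f (fun c => g1 c + g2 c) = herm f g1 + herm f g2.
Proof.
move=> hf h1 h2; have [Re1 Im1] := abs_summable_mul_conj hf h1.
have [Re2 Im2] := abs_summable_mul_conj hf h2.
rewrite /herm Complex_add -(rsumD Re1 Re2) -(rsumD Im1 Im2); congr Complex; congr rsum;
  by apply/funext => c; case: (f c) (g1 c) (g2 c) => [a b] [x y] [x' y'] /=; ring.
Qed.

Lemma hermNl f g : herm (fun c => - f c) g = - herm f g.
Proof.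
rewrite /herm Complex_opp -!rsumN; congr Complex; congr rsum;
  by apply/funext => c; case: (f c) (g c) => [a b] [x y] /=; ring.
Qed.

Lemma hermNr f g : herm f (fun c => - g c) = - herm f g.
Proof.
rewrite /herm Complex_opp -!rsumN; congr Complex; congr rsum;
  by apply/funext => c; case: (f c) (g c) => [a b] [x y] /=; ring.
Qed.

Definition l2_adjoint T S :=
  forall f g, l2_finite f -> l2_finite g -> herm (T f) g = herm f (S g).

Definition bounded_adjoints T S := [/\ l2_bounded T, l2_bounded S & l2_adjoint T S].

Lemma bounded_adjoints_id : bounded_adjoints id id.
Proof. by split; first exact: l2_bounded_id; first exact: l2_bounded_id. Qed.

Lemma bounded_adjointsN T S : bounded_adjoints T S -> bounded_adjoints (oppop T) (oppop S).
Proof.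
case=> bT bS hTS; split; try exact: l2_boundedN.
by move=> f g hf hg; rewrite /oppop hermNl hermNr hTS.
Qed.

Lemma bounded_adjointsD T1 T2 S1 S2 : bounded_adjoints T1 S1 -> bounded_adjoints T2 S2 ->
  bounded_adjoints (addop T1 T2) (addop S1 S2).
Proof.
case=> bT1 bS1 h1 [bT2 bS2 h2]; split; try exact: l2_boundedD.
by move=> f g hf hg; rewrite /addop hermDl ?hermDr ?h1 ?h2 // l2_bounded_finite.
Qed.

Lemma bounded_adjoints_partial_perm s d : involutive s ->
  bounded_adjoints (partial_perm s d) (partial_perm s (fun c => d (s c))).
Proof.
move=> sK; split; try exact: l2_bounded_partial_perm.
move=> f g _ _; rewrite /herm.
rewrite -(rsum_involutive (fun c => complex.Re (f c * conjc (partial_perm s _ g c))) sK).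
rewrite -(rsum_involutive (fun c => complex.Im (f c * conjc (partial_perm s _ g c))) sK).
by congr Complex; congr rsum; apply/funext => c; rewrite /partial_perm sK;
  case: (d c); rewrite ?mul0r ?conjc0 ?mulr0.
Qed.

End Hermitian.

Section Operators.
Variable R : realType.
Implicit Types (f g : vec R) (T S N Nt : vec R -> vec R).

Definition linear_op T :=
  forall (a : R[i]) f g, T (fun c => a * f c + g c) = (fun c => a * T f c + T g c).

Lemma linear_opD T S : linear_op T -> linear_op S -> linear_op (addop T S).
Proof.
move=> hT hS a f g; rewrite /addop hT hS; apply/funext => c; ring.
Qed.

Lemma linear_opN T : linear_op T -> linear_op (oppop T).
Proof. by move=> hT a f g; rewrite /oppop hT; apply/funext => c; ring. Qed.

Lemma linear_op_partial_perm s d : linear_op (partial_perm s d).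
Proof.
by move=> a f g; apply/funext => c; rewrite /partial_perm; case: (d c); rewrite ?mulr0 ?addr0.
Qed.

Lemma unipotent_inverse N : linear_op N -> (forall f, N (N f) = fun=> 0) ->
  forall f, addop id N (addop id (oppop N) f) = f /\ addop id (oppop N) (addop id N f) = f.
Proof.
move=> Nlin N2 f.
have N_shift (b : R[i]) : N (fun c => b * N f c + f c) = N f.
  by rewrite Nlin N2; apply/funext => c; rewrite mulr0 add0r.
have -> : addop id (oppop N) f = fun c => -1 * N f c + f c.
  by apply/funext => c; rewrite /addop /oppop mulN1r addrC.
have -> : addop id N f = fun c => 1 * N f c + f c.
  by apply/funext => c; rewrite /addop mul1r addrC.
by rewrite /addop /oppop !N_shift; split; apply/funext => c /=; ring.
Qed.

Variable W : diagram.

Definition support_stable T :=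
  forall f, (forall c, ~ CW W c -> f c = 0) -> forall c, ~ CW W c -> T f c = 0.

Definition finsupp_stable T :=
  forall f, finite_set [set c | f c != 0] -> finite_set [set c | T f c != 0].

Lemma support_stable_id : support_stable id.
Proof. by move=> f. Qed.

Lemma support_stableD T S : support_stable T -> support_stable S -> support_stable (addop T S).
Proof. by move=> hT hS f hf c hc; rewrite /addop hT ?hS ?addr0. Qed.

Lemma support_stableN T : support_stable T -> support_stable (oppop T).
Proof. by move=> hT f hf c hc; rewrite /oppop hT ?oppr0. Qed.

Lemma support_stable_partial_perm s (d : pred vtx) :
  (forall c, d c -> CW W c) -> support_stable (partial_perm s d).
Proof.
by move=> dW f _ c hc; rewrite /partial_perm; case: ifP => // /dW /hc.
Qed.

Lemma finsupp_stable_id : finsupp_stable id.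
Proof. by move=> f. Qed.

Lemma finsupp_stableD T S : finsupp_stable T -> finsupp_stable S -> finsupp_stable (addop T S).
Proof.
move=> hT hS f hf.
apply: (@sub_finite_set _ _ ([set c | T f c != 0] `|` [set c | S f c != 0])).
  move=> c /=; rewrite /addop; have [->|] := eqVneq (T f c) 0; last by left.
  by rewrite add0r; right.
by rewrite finite_setU; split; [exact: hT | exact: hS].
Qed.

Lemma finsupp_stableN T : finsupp_stable T -> finsupp_stable (oppop T).
Proof. by move=> hT f /hT; congr finite_set; apply/seteqP; split => c /=; rewrite oppr_eq0. Qed.

Lemma finsupp_stable_partial_perm s d : involutive s -> finsupp_stable (partial_perm s d).
Proof.
move=> sK f hf; apply: sub_finite_set (finite_image s hf) => c /=.
rewrite /partial_perm; case: (d c); rewrite ?eqxx // => nz.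
by exists (s c); rewrite ?sK.
Qed.

Definition H_compatible T := [/\ support_stable T, finsupp_stable T & linear_op T].

Lemma H_compatible_id : H_compatible id.
Proof. by split; [exact: support_stable_id | exact: finsupp_stable_id | ]. Qed.

Lemma H_compatibleD T S : H_compatible T -> H_compatible S -> H_compatible (addop T S).
Proof.
case=> sT fT lT [sS fS lS]; split;
  [exact: support_stableD | exact: finsupp_stableD | exact: linear_opD].
Qed.

Lemma H_compatibleN T : H_compatible T -> H_compatible (oppop T).
Proof.
case=> sT fT lT; split; [exact: support_stableN | exact: finsupp_stableN | exact: linear_opN].
Qed.

Lemma H_compatible_partial_perm s (d : pred vtx) : involutive s -> (forall c, d c -> CW W c) ->
  H_compatible (partial_perm s d).
Proof.
move=> sK dW; split;
  [exact: support_stable_partial_perm | exact: finsupp_stable_partial_perm |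
   exact: linear_op_partial_perm].
Qed.

Lemma inH_stable T u : H_compatible T -> inH W u -> inH W (T u).
Proof. by case=> hs hf _ [hu fu]; split; [exact: hs | exact: hf]. Qed.

Lemma bounded_extension_intro phi T : H_compatible T -> l2_bounded T ->
  (forall u, inH W u -> T u = phi u) -> bounded_extension W phi T.
Proof.
case=> hs _ hlin bT hphi; split => //.
- by move=> f [hf fin]; split; [exact: hs | exact: l2_bounded_finite].
- by have [M [M0 hM]] := bT; exists M; split => // f _; exact: hM.
Qed.

Lemma inverse_on_H_unipotent phi N : H_compatible N -> (forall f, N (N f) = fun=> 0) ->
  (forall u, inH W u -> phi u = addop id (oppop N) u) -> inverse_on_H W phi (addop id N).
Proof.
move=> hN N2 hphi u hu; have [_ _ Nlin] := hN.
have hNu : inH W (addop id N u) by apply: inH_stable hu; exact: H_compatibleD H_compatible_id hN.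
have [K1 K2] := unipotent_inverse Nlin N2 u.
by split => //; rewrite hphi.
Qed.

End Operators.

Definition CWb (W : diagram) (c : vtx) : bool :=
  match c with
  | c0 n | c1 n => (0 < n)%N
  | c0p | c0m => if W is D_half_inf then true else false end.

Lemma CWP W c : reflect (CW W c) (CWb W c).
Proof.
rewrite /CW /CW0 /CW1; case: W; case: c => [n|n||] /=; apply: (iffP idP);
  by [left | right | case].
Qed.

Definition adjb (W : diagram) (c c' : vtx) : bool :=
  match c, c' with
  | c0 n, c1 m => (0 < n)%N && ((m == n) || (m == n.+1))
  | c0p, c1 m | c0m, c1 m => (if W is D_half_inf then true else false) && (m == 1)%N
  | _, _ => false end.

Lemma adjP W c c' : reflect (adj W c c') (adjb W c c').
Proof.
rewrite /adj /CW0 /CW1; case: W; case: c => [n|n||]; case: c' => [m|m||] /=;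
  apply: (iffP idP) => //; try by case=> ? [].
- by move=> /andP[n0 /orP[/eqP->|/eqP->]]; do !split => //; [left | right].
- by case=> n0 [_ [->|->]]; rewrite n0 eqxx ?orbT.
- by move=> /andP[n0 /orP[/eqP->|/eqP->]]; do !split => //; [left | right].
- by case=> n0 [_ [->|->]]; rewrite n0 eqxx ?orbT.
all: by [move=> /eqP-> | case=> _ [_ ->]].
Qed.

Definition edge_same (c : vtx) : vtx :=
  match c with c0 n => c1 n | c1 n => c0 n | x => x end.
Definition edge_succ (c : vtx) : vtx :=
  match c with c0 n => c1 n.+1 | c1 n.+1 => c0 n | x => x end.
Definition edge_plus (c : vtx) : vtx :=
  match c with c0p => c1 1 | c1 1 => c0p | x => x end.
Definition edge_minus (c : vtx) : vtx :=
  match c with c0m => c1 1 | c1 1 => c0m | x => x end.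

Lemma edge_sameK : involutive edge_same. Proof. by case. Qed.
Lemma edge_succK : involutive edge_succ. Proof. by case=> [n|[|n]||]. Qed.
Lemma edge_plusK : involutive edge_plus. Proof. by case=> [n|[|[|n]]||]. Qed.
Lemma edge_minusK : involutive edge_minus. Proof. by case=> [n|[|[|n]]||]. Qed.

(* The [C_{W,1}]-ends of the edges in each of the four matchings. *)
Definition head_same (c : vtx) : bool := if c is c1 n.+1 then true else false.
Definition head_succ (c : vtx) : bool := if c is c1 n.+2 then true else false.
Definition head_pm (W : diagram) (c : vtx) : bool :=
  match W, c with D_half_inf, c1 1 => true | _, _ => false end.

Definition edge_op (R : realType) (d1 d2 d3 d4 : pred vtx) : vec R -> vec R :=
  addop (partial_perm edge_same d1)
    (addop (partial_perm edge_succ d2)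
      (addop (partial_perm edge_plus d3) (partial_perm edge_minus d4))).

Definition adjacency_op (R : realType) (W : diagram) : vec R -> vec R :=
  edge_op head_same head_succ (head_pm W) (head_pm W).

Definition adjacency_op_tr (R : realType) (W : diagram) : vec R -> vec R :=
  edge_op (fun c => head_same (edge_same c)) (fun c => head_succ (edge_succ c))
    (fun c => head_pm W (edge_plus c)) (fun c => head_pm W (edge_minus c)).

Lemma bounded_adjoints_edge_op (R : realType) (d1 d2 d3 d4 : pred vtx) :
  bounded_adjoints (@edge_op R d1 d2 d3 d4)
  (edge_op (fun c => d1 (edge_same c)) (fun c => d2 (edge_succ c))
     (fun c => d3 (edge_plus c)) (fun c => d4 (edge_minus c))).
Proof.
rewrite /edge_op; apply: bounded_adjointsD; first exact: bounded_adjoints_partial_perm edge_sameK.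
apply: bounded_adjointsD; first exact: bounded_adjoints_partial_perm edge_succK.
by apply: bounded_adjointsD; apply: bounded_adjoints_partial_perm;
  [exact: edge_plusK | exact: edge_minusK].
Qed.

Lemma H_compatible_edge_op (R : realType) W (d1 d2 d3 d4 : pred vtx) :
  (forall c, [|| d1 c, d2 c, d3 c | d4 c] -> CW W c) ->
  H_compatible W (@edge_op R d1 d2 d3 d4).
Proof.
move=> hd; rewrite /edge_op.
have hP s (d : pred vtx) : involutive s -> (forall c, d c -> CW W c) ->
  H_compatible W (@partial_perm R s d) by exact: H_compatible_partial_perm.
apply: H_compatibleD; first by apply: hP edge_sameK _ => c dc; apply: hd; rewrite dc.
apply: H_compatibleD; first by apply: hP edge_succK _ => c dc; apply: hd; rewrite dc orbT.
by apply: H_compatibleD; [apply: hP edge_plusK _ | apply: hP edge_minusK _]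
  => c dc; apply: hd; rewrite dc !orbT.
Qed.

Lemma edge_op_sqr0 (R : realType) (P d1 d2 d3 d4 : pred vtx) :
  (forall c, [/\ d1 c -> P c && ~~ P (edge_same c), d2 c -> P c && ~~ P (edge_succ c),
     d3 c -> P c && ~~ P (edge_plus c) & d4 c -> P c && ~~ P (edge_minus c)]) ->
  forall f : vec R, edge_op d1 d2 d3 d4 (edge_op d1 d2 d3 d4 f) = fun=> 0.
Proof.
move=> hP f; set N := edge_op d1 d2 d3 d4.
have N_off c : ~~ P c -> N f c = 0.
  move=> Pc; have [h1 h2 h3 h4] := hP c.
  have off (d : pred vtx) (s : vtx -> vtx) : (d c -> P c && ~~ P (s c)) -> d c = false.
    by move=> h; apply/negP => /h /andP[Pc'] _; rewrite Pc' in Pc.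
  rewrite /N /edge_op /addop /partial_perm.
  by rewrite (off _ _ h1) (off _ _ h2) (off _ _ h3) (off _ _ h4) !addr0.
apply/funext => c; have [h1 h2 h3 h4] := hP c.
have into (d : pred vtx) (s : vtx -> vtx) :
    (d c -> P c && ~~ P (s c)) -> partial_perm s d (N f) c = 0.
  by move=> h; rewrite /partial_perm; case: ifP => // /h /andP[_ /N_off].
by rewrite {1}/N /edge_op /addop (into _ _ h1) (into _ _ h2) (into _ _ h3) (into _ _ h4) !addr0.
Qed.

Lemma adjacency_op_sqr0 (R : realType) W (f : vec R) :
  adjacency_op W (adjacency_op W f) = fun=> 0.
Proof.
apply: (edge_op_sqr0 (P := fun c => if c is c1 _ then true else false)) => c.
by case: W; case: c => [n|[|[|n]]||].
Qed.

Lemma adjacency_op_tr_sqr0 (R : realType) W (f : vec R) :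
  adjacency_op_tr W (adjacency_op_tr W f) = fun=> 0.
Proof.
apply: (edge_op_sqr0 (P := fun c => if c is c1 _ then false else true)) => c.
by case: W; case: c => [[|[|n]]|[|[|n]]||].
Qed.

Lemma H_compatible_adjacency_op (R : realType) W :
  H_compatible W (@adjacency_op R W) /\ H_compatible W (@adjacency_op_tr R W).
Proof.
by split; apply: H_compatible_edge_op => c hc; apply/CWP; move: hc;
  case: W; case: c => [[|[|n]]|[|[|n]]||].
Qed.

Section ColumnSums.
Variable R : realType.
Implicit Types (A : set vtx) (u : vec R).

Lemma fsum_single A (G : vtx -> R[i]) a :
  (forall x, x != a -> G x = 0) -> (~ A a -> G a = 0) -> \sum_(x \in A) G x = G a.
Proof.
move=> Ga hA; have [Aa|nAa] := pselect (A a); last first.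
  by rewrite fsbig1 ?hA // => x Ax; have [xa|/Ga//] := eqVneq x a; rewrite xa in Ax.
rewrite -(fsbig_widen [set a] A G) ?fsbig_set1 //; first by move=> x ->.
by move=> x [_ xa]; apply: Ga; apply/eqP.
Qed.

Lemma fsum_mul_delta A u (b : bool) a : (forall x, ~ A x -> u x = 0) ->
  \sum_(x \in A) u x * (b && (x == a))%:R = b%:R * u a.
Proof.
move=> u0; rewrite (@fsum_single _ _ a) => [|x xa|/u0 ->]; last by rewrite mul0r.
  by rewrite eqxx andbT mulrC.
by rewrite (negPf xa) andbF mulr0.
Qed.

Lemma fsum_column A u c a1 a2 a3 a4 (b1 b2 b3 b4 : bool) :
  finite_set [set x | u x != 0] -> (forall x, ~ A x -> u x = 0) ->
  \sum_(x \in A) u x * ((x == c)%:R -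
    ((b1 && (x == a1))%:R + ((b2 && (x == a2))%:R +
    ((b3 && (x == a3))%:R + (b4 && (x == a4))%:R)))) =
  u c - (b1%:R * u a1 + (b2%:R * u a2 + (b3%:R * u a3 + b4%:R * u a4))).
Proof.
set S := [set x | u x != 0] => Sfin u0.
have uS x : ~ S x -> u x = 0 by move=> /negP; rewrite negbK => /eqP.
rewrite -(@fsbig_widen _ _ _ _ S A); first last.
- by move=> x [_ /uS ux]; rewrite /preimage /= ux mul0r.
- by move=> x Sx; apply: contrapT => /u0 ux; rewrite /S /= ux eqxx in Sx.
rewrite (eq_fsbigr (fun x => u x * (true && (x == c))%:R + -1 * (u x * (b1 && (x == a1))%:R +
  (u x * (b2 && (x == a2))%:R + (u x * (b3 && (x == a3))%:R + u x * (b4 && (x == a4))%:R)))));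
  last by move=> x _; rewrite /=; ring.
(* Stated for abstract summands: matching [fsbig_split] against the concrete
   ones is very slow. *)
have sum5 (F0 F1 F2 F3 F4 : vtx -> R[i]) :
    \sum_(x \in S) (F0 x + -1 * (F1 x + (F2 x + (F3 x + F4 x)))) =
    \sum_(x \in S) F0 x + -1 * (\sum_(x \in S) F1 x +
      (\sum_(x \in S) F2 x + (\sum_(x \in S) F3 x + \sum_(x \in S) F4 x))).
  by rewrite !fsbig_finite //= big_split /= -big_distrr /= !big_split.
rewrite sum5 !fsum_mul_delta //.
by rewrite mul1r mulN1r.
Qed.

End ColumnSums.

Lemma Jentry_col (R : realType) W c c' : CW W c ->
  Jentry R W c' c = (c' == c)%:R -
    ((head_same c && (c' == edge_same c))%:R + ((head_succ c && (c' == edge_succ c))%:R +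
    ((head_pm W c && (c' == edge_plus c))%:R + (head_pm W c && (c' == edge_minus c))%:R))).
Proof.
move=> /CWP hc; rewrite /Jentry (asbool_equiv_eqP (andPP (CWP W c') (@eqP _ c' c)) (iff_refl _)).
rewrite (asbool_equiv_eqP (adjP W c' c) (iff_refl _)).
case: W hc; case: c => [n|n||]; case: c' => [m|m||] //=;
  try case: n => [|[|n]]; try case: m => [|[|m]] => //= _; rewrite ?eqE /= ?xpair_eqE /=.
all: try move=> _; rewrite ?eqSS; repeat (case: eqP => ? //=; try (exfalso; lia)).
all: repeat (case: eqnP => ? //=; try (exfalso; lia)).
all: ring.
Qed.

Lemma partial_permE (R : realType) s (d : pred vtx) (f : vec R) c :
  partial_perm s d f c = (d c)%:R * f (s c).
Proof. by rewrite /partial_perm; case: (d c); rewrite ?mul1r ?mul0r. Qed.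

Lemma gammaE (R : realType) (a c : vtx) : @gamma R a c = (c == a)%:R.
Proof. by rewrite /gamma (asbool_equiv_eqP eqP (iff_refl _)); case: (c == a). Qed.

Lemma involutive_and_eq (s : vtx -> vtx) (d : pred vtx) c c' : involutive s ->
  d c' && (c == s c') = d (s c) && (c' == s c).
Proof.
move=> sK; have [->|ne] := eqVneq c (s c'); first by rewrite sK eqxx.
rewrite andbF; case: eqP => [e|_]; last by rewrite andbF.
by rewrite e sK eqxx in ne.
Qed.

Lemma Jentry_row (R : realType) W c c' : CW W c' ->
  Jentry R W c c' = (c' == c)%:R -
    ((head_same (edge_same c) && (c' == edge_same c))%:R +
    ((head_succ (edge_succ c) && (c' == edge_succ c))%:R +
    ((head_pm W (edge_plus c) && (c' == edge_plus c))%:R +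
     (head_pm W (edge_minus c) && (c' == edge_minus c))%:R))).
Proof.
move=> hc'; rewrite Jentry_col // eq_sym.
by rewrite (involutive_and_eq _ _ _ edge_sameK) (involutive_and_eq _ _ _ edge_succK)
  (involutive_and_eq _ _ _ edge_plusK) (involutive_and_eq _ _ _ edge_minusK).
Qed.

Lemma JWdotE (R : realType) W (u : vec R) : inH W u ->
  JWdot W u = addop id (oppop (adjacency_op W)) u.
Proof.
move=> [u0 ufin]; apply/funext => c; rewrite /JWdot /addop /oppop /=.
case: asboolP => hc; last first.
  by have [[sN _ _] _] := H_compatible_adjacency_op R W; rewrite u0 // sN // oppr0 addr0.
rewrite /JW (eq_fsbigr (fun x => u x * Jentry R W x c)); last first.
  move=> x _; rewrite (@fsum_single _ _ _ c) => [|y yc|//].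
    by rewrite gammaE eqxx mulr1.
  by rewrite gammaE (negPf yc) mulr0 mul0r.
under eq_fsbigr do rewrite Jentry_col //.
rewrite fsum_column //.
by rewrite /adjacency_op /edge_op /addop !partial_permE.
Qed.

Lemma tJWdotE (R : realType) W (u : vec R) : inH W u ->
  tJWdot W u = addop id (oppop (adjacency_op_tr W)) u.
Proof.
move=> [u0 ufin]; apply/funext => c; rewrite /tJWdot /addop /oppop /=.
case: asboolP => hc; last first.
  by have [_ [sN _ _]] := H_compatible_adjacency_op R W; rewrite u0 // sN // oppr0 addr0.
rewrite /tJW /JW (@fsum_single _ _ _ c) => [|x xc|//]; last first.
  by apply: fsbig1 => y _; rewrite gammaE (negPf xc) mul0r mul0r.
rewrite (eq_fsbigr (fun y => u y * Jentry R W c y)); last first.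
  by move=> y _; rewrite gammaE eqxx mul1r.
under eq_fsbigr => y /set_mem hy do rewrite Jentry_row //.
rewrite fsum_column //.
by rewrite /adjacency_op_tr /edge_op /addop !partial_permE.
Qed.

Theorem mainTheorem7 (R : realType) (W : diagram) :
  (forall u : vec R, inH W u -> inH W (JWdot W u) /\ inH W (tJWdot W u)) /\
  exists Jinv tJinv : vec R -> vec R,
    inverse_on_H W (JWdot W) Jinv /\ inverse_on_H W (tJWdot W) tJinv /\
    exists T tT Ti tTi : vec R -> vec R,
      [/\ bounded_extension W (JWdot W) T,
          bounded_extension W (tJWdot W) tT,
          bounded_extension W Jinv Ti
        & bounded_extension W tJinv tTi] /\
      adjoint_pair W T tT /\ adjoint_pair W Ti tTi.
Proof.
pose N := @adjacency_op R W; pose Nt := @adjacency_op_tr R W.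
have [hN hNt] := H_compatible_adjacency_op R W.
have hJ := H_compatibleD (H_compatible_id R W) (H_compatibleN hN).
have htJ := H_compatibleD (H_compatible_id R W) (H_compatibleN hNt).
have hJi := H_compatibleD (H_compatible_id R W) hN.
have htJi := H_compatibleD (H_compatible_id R W) hNt.
have bN : bounded_adjoints N Nt by exact: bounded_adjoints_edge_op.
have [bJ btJ adjJ] := bounded_adjointsD (bounded_adjoints_id R) (bounded_adjointsN bN).
have [bJi btJi adjJi] := bounded_adjointsD (bounded_adjoints_id R) bN.
split.
  by move=> u hu; rewrite JWdotE // tJWdotE //; split; exact: inH_stable.
exists (addop id N), (addop id Nt); split.
  by apply: inverse_on_H_unipotent => // [f|u /JWdotE]; [exact: adjacency_op_sqr0 |].
split.
  by apply: inverse_on_H_unipotent => // [f|u /tJWdotE]; [exact: adjacency_op_tr_sqr0 |].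
exists (addop id (oppop N)), (addop id (oppop Nt)), (addop id N), (addop id Nt).
split; last by split => f g [_ hf] [_ hg]; [exact: adjJ | exact: adjJi].
split; apply: bounded_extension_intro => //.
- by move=> u /JWdotE.
- by move=> u /tJWdotE.
Qed.
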